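(* Let $\mathit{Lin}_n,\mathit{Lout}_n,\mathit{Ain}_n,\mathit{Aout}_n$ be the solution of the data flow equations for a procedure $p$ computed by iteration starting from $\emptyset$ for every variable. Let $n$ be a node, $x\in\mathbf{P}$ and $z\in\mathbf{V}\setminus\{?\}$. If, along some execution path from $\mathrm{Start}_p$ reaching node $n$ (executing the pointer assignment statements with their usual meaning, pointers being undefined, i.e. holding $?$, at $\mathrm{Start}_p$), $x$ holds the address of $z$ on entry to $n$, then $x\in\mathit{Ref}_n$ implies $(x,z)\in\mathit{Ain}_n$.
   Context: $\mathbf{V}$ is a finite set of variables, $\mathbf{P}\subseteq\mathbf{V}$ the set of pointer variables, and $\mathbf{V}\setminus\mathbf{P}$ contains a special element $?$ (undefined location). A procedure $p$ is a control flow graph whose nodes are statements, with unique entry node $\mathrm{Start}_p$ (no predecessors) and unique exit node $\mathrm{End}_p$ (no successors), every node reachable from $\mathrm{Start}_p$ and $\mathrm{End}_p$ reachable from every node; $\mathit{succ}(n)$, $\mathit{pred}(n)$ denote successors/predecessors. Every node is of one of the forms: ''use $x$'', ''$x=\&a$'', ''$x=y$'', ''$x=*y$'', ''$*x=y$'', or ''other'', where $x,y\in\mathbf{P}$, $a\in\mathbf{V}$. Relation notation for $R\subseteq\mathbf{P}\times\mathbf{V}$ and a set $X$: $R\,X=\{v\mid u\in X,\ (u,v)\in R\}$; $R|_X=\{(u,v)\in R\mid u\in X\}$; $R^2=\{(u,w)\mid (u,v)\in R,\ (v,w)\in R\}$. $\mathit{Must}(R)=\bigcup_{x\in\mathbf{P}}\{x\}\times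 M_x$, where $M_x=\mathbf{V}$ if $R|_{\{x\}}=\emptyset$ or $R|_{\{x\}}=\{(x,?)\}$; $M_x=\{y\}$ if $R|_{\{x\}}=\{(x,y)\}$ with $y\neq ?$; and $M_x=\emptyset$ otherwise. Extractor functions of node $n$ (with $A=\mathit{Ain}_n$): - use $x$: $\mathit{Def}_n=\emptyset$, $\mathit{Kill}_n=\emptyset$, $\mathit{Ref}_n=\{x\}$, $\mathit{Pointee}_n=\emptyset$. - $x=\&a$: $\mathit{Def}_n=\{x\}$, $\mathit{Kill}_n=\{x\}$, $\mathit{Ref}_n=\emptyset$, $\mathit{Pointee}_n=\{a\}$. - $x=y$: $\mathit{Def}_n=\{x\}$, $\mathit{Kill}_n=\{x\}$, $\mathit{Ref}_n=\{y\}$ if $\mathit{Def}_n\cap\mathit{Lout}_n\neq\emptyset$ and $\emptyset$ otherwise, $\mathit{Pointee}_n=A\{y\}$. - $x=*y$: $\mathit{Def}_n=\{x\}$, $\mathit{Kill}_n=\{x\}$, $\mathit{Ref}_n=\{y\}\cup((A\{y\})\cap\mathbf{P})$ if $\mathit{Def}_n\cap\mathit{Lout}_n\neq\emptyset$ and $\emptyset$ otherwise, $\mathit{Pointee}_n=A^2\{y\}$. - $*x=y$: $\mathit{Def}_n=(A\{x\})\cap\mathbf{P}$, $\mathit{Kill}_n=(\mathit{Must}(A)\{x\})\cap\mathbf{P}$, $\mathit{Ref}_n=\{x,y\}$ if $\mathit{Def}_n\cap\mathit{Lout}_n\neq\emptyset$ and $\{x\}$ otherwise, $\mathit{Pointee}_n=A\{y\}$.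 - other: all four are $\emptyset$. Data flow equations: $\mathit{Lout}_n=\emptyset$ if $n=\mathrm{End}_p$, else $\bigcup_{s\in\mathit{succ}(n)}\mathit{Lin}_s$; $\mathit{Lin}_n=(\mathit{Lout}_n-\mathit{Kill}_n)\cup\mathit{Ref}_n$; $\mathit{Ain}_n=\mathit{Lin}_n\times\{?\}$ if $n=\mathrm{Start}_p$, else $\big(\bigcup_{m\in\mathit{pred}(n)}\mathit{Aout}_m\big)|_{\mathit{Lin}_n}$; $\mathit{Aout}_n=\big((\mathit{Ain}_n-(\mathit{Kill}_n\times\mathbf{V}))\cup(\mathit{Def}_n\times\mathit{Pointee}_n)\big)|_{\mathit{Lout}_n}$. The solution is the greatest fixed point with respect to the data-flow order in which $\sqsubseteq$ is $\supseteq$ (top element $\emptyset$). *)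

From HB Require Import structures.
From mathcomp Require Import all_boot.
Set Implicit Arguments. Unset Strict Implicit. Unset Printing Implicit Defensive.

Inductive stmt (V : Type) :=
| SUse   (x : V)
| SAddr  (x a : V)      (* x = &a  *)
| SCopy  (x y : V)      (* x = y   *)
| SLoad  (x y : V)      (* x = *y  *)
| SStore (x y : V)      (* *x = y  *)
| SOther.
Arguments SOther {V}.

Section DFA.
Variables (V : finType) (P : {set V}) (undef : V).

Definition img (R : {set V * V}) (X : {set V}) : {set V} :=
  [set v | [exists u in X, (u, v) \in R]].
Definition restr (R : {set V * V}) (X : {set V}) : {set V * V} :=
  [set p in R | p.1 \in X].

Definition Mset (R : {set V * V}) (x : V) : {set V} :=
  let Rx := restr R [set x] in
  if (Rx == set0) || (Rx == [set (x, undef)]) then setT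
  else if [exists y, (y != undef) && (Rx == [set (x, y)])] then img R [set x]
  else set0.

Definition Must (R : {set V * V}) : {set V * V} :=
  [set p | (p.1 \in P) && (p.2 \in Mset R p.1)].

Definition Def (s : stmt V) (A : {set V * V}) : {set V} :=
  match s with
  | SAddr x _ | SCopy x _ | SLoad x _ => [set x]
  | SStore x _ => img A [set x] :&: P
  | _ => set0
  end.

Definition Kill (s : stmt V) (A : {set V * V}) : {set V} :=
  match s with
  | SAddr x _ | SCopy x _ | SLoad x _ => [set x]
  | SStore x _ => img (Must A) [set x] :&: P
  | _ => set0
  end.

Definition Ref (s : stmt V) (A : {set V * V}) (Lo : {set V}) : {set V} :=
  match s with
  | SUse x => [set x]
  | SAddr _ _ => set0
  | SCopy x y => if Def s A :&: Lo != set0 then [set y] else set0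
  | SLoad x y => if Def s A :&: Lo != set0 then [set y] :|: (img A [set y] :&: P)
                 else set0
  | SStore x y => if Def s A :&: Lo != set0 then [set x; y] else [set x]
  | SOther => set0
  end.

Definition Pointee (s : stmt V) (A : {set V * V}) : {set V} :=
  match s with
  | SAddr _ a => [set a]
  | SCopy _ y => img A [set y]
  | SLoad _ y => img A (img A [set y])
  | SStore _ y => img A [set y]
  | _ => set0
  end.

Variables (N : finType) (start endn : N) (succ : N -> {set N}) (lab : N -> stmt V).

Definition predn (n : N) : {set N} := [set m | n \in succ m].

Record sol := Sol {
  Lin  : {ffun N -> {set V}};
  Lout : {ffun N -> {set V}};
  Ain  : {ffun N -> {set V * V}};
  Aout : {ffun N -> {set V * V}} }.

Definition sol0 : sol := Sol [ffun=> set0] [ffun=> set0] [ffun=> set0] [ffun=> set0].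

(* One (simultaneous, Jacobi-style) round of evaluating all data flow equations. *)
Definition step (S : sol) : sol :=
  Sol
    [ffun n => (Lout S n :\: Kill (lab n) (Ain S n)) :|: Ref (lab n) (Ain S n) (Lout S n)]
    [ffun n => if n == endn then set0 else \bigcup_(s in succ n) Lin S s]
    [ffun n => if n == start then setX (Lin S n) [set undef]
               else restr (\bigcup_(m in predn n) Aout S m) (Lin S n)]
    [ffun n => restr ((Ain S n :\: setX (Kill (lab n) (Ain S n)) setT)
                       :|: setX (Def (lab n) (Ain S n)) (Pointee (lab n) (Ain S n)))
                     (Lout S n)].

Definition stmt_ok (s : stmt V) : bool :=
  match s with
  | SUse x => x \in P
  | SAddr x _ => x \in P
  | SCopy x y | SLoad x y | SStore x y => (x \in P) && (y \in P)
  | SOther => true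
  end.

Definition edge : rel N := fun a b => b \in succ a.

Definition wf_proc : Prop :=
  undef \notin P /\
  [/\ (forall m, start \notin succ m),
      succ endn = set0,
      (forall n, connect edge start n),
      (forall n, connect edge n endn)
    & (forall n, stmt_ok (lab n))].

(* Concrete semantics: a state gives the value (an address, i.e. a variable,
   or [undef]) held by each variable; only pointer variables are ever written. *)
Definition upd (sg : V -> V) (x v : V) : V -> V :=
  fun w => if w == x then v else sg w.

(* None = execution is stuck (dereference of an undefined pointer). *)
Definition exec (s : stmt V) (sg : V -> V) : option (V -> V) :=
  match s with
  | SAddr x a => Some (upd sg x a)
  | SCopy x y => Some (upd sg x (sg y))
  | SLoad x y => if sg y == undef then None
                 else Some (upd sg x (if sg y \in P then sg (sg y) else undef))
  | SStore x y => if sg x == undef then None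
                  else if sg x \in P then Some (upd sg (sg x) (sg y)) else Some sg
  | _ => Some sg
  end.

Inductive reaches : N -> (V -> V) -> Prop :=
| reaches_start : reaches start (fun _ => undef)
| reaches_step m n sg sg' :
    reaches m sg -> n \in succ m -> exec (lab m) sg = Some sg' -> reaches n sg'.

End DFA.

From Pilot Require Import Defs.
From mathcomp Require Import all_boot.

(* The proof is an invariant over executions.  Say that a concrete state
   [sg] agrees with a points-to relation [A] on a set [L] of variables when
   every variable of [L] holding a defined address [v] has [(x, v) \in A].
   1. Transfer soundness (a property of one statement, for arbitrary [A] and
      live-out set [Lo]): if [sg] agrees with [A] on the live-in set
      [(Lo :\: Kill) :|: Ref], and executing the statement yields [sg'], then
      [sg'] agrees on [Lo] with the gen/kill update of [A].  The only subtle
      case is [*x = y], whose Kill set is computed from [Must A]: a must-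
      pointee of [x] is necessarily the value [x] actually holds.
   2. At any fixed point of the equations, every state reaching [n] agrees
      with [Ain n] on [Lin n] (induction on the execution, using 1).
   3. The theorem follows since [Ref n] is contained in [Lin n]. *)

Set Implicit Arguments.
Unset Strict Implicit.
Unset Printing Implicit Defensive.

Section Transfer.
Variables (V : finType) (P : {set V}) (undef : V).

Lemma upd_same (sg : V -> V) (x v : V) : upd sg x v x = v.
Proof. by rewrite /upd eqxx. Qed.

Lemma upd_other (sg : V -> V) (x v w : V) : w != x -> upd sg x v w = sg w.
Proof. by rewrite /upd => /negbTE ->. Qed.

(* The gen/kill part of the Aout equation, before restriction to Lout. *)
Definition transfer (s : stmt V) (A : {set V * V}) : {set V * V} :=
  (A :\: setX (Kill P undef s A) setT) :|: setX (Def P s A) (Pointee s A).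

Definition agrees (A : {set V * V}) (L : {set V}) (sg : V -> V) : Prop :=
  forall x, x \in L -> sg x != undef -> (x, sg x) \in A.

Lemma mem_img1 (A : {set V * V}) (y v : V) :
  (v \in img A [set y]) = ((y, v) \in A).
Proof.
rewrite inE; apply/existsP/idP => [[u /andP [/set1P -> //]] | yvA].
by exists y; rewrite set11 yvA.
Qed.

(* If [y] may point to a defined [v], then [v] is its only possible
   must-pointee; this makes the Kill set of [*y = w] safe. *)
Lemma Must_pointee (A : {set V * V}) (y v u : V) :
  (y, v) \in A -> v != undef -> u \in img (Must P undef A) [set y] -> u = v.
Proof.
move=> yvA v_def; rewrite mem_img1 inE /= => /andP [_].
have yvR : (y, v) \in restr A [set y] by rewrite inE yvA /= set11.
rewrite /Mset; have -> : (restr A [set y] == set0) = false.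
  by apply/negbTE/set0Pn; exists (y, v).
have -> : (restr A [set y] == [set (y, undef)]) = false.
  by apply/negbTE; apply: contra_neq v_def => E; move: yvR; rewrite E => /set1P [].
case: ifP => [/existsP [y' /andP [_ /eqP E]] | _]; last by rewrite inE.
rewrite mem_img1 => yuA.
have yuR : (y, u) \in restr A [set y] by rewrite inE yuA /= set11.
by move: yvR yuR; rewrite E => /set1P [->] /set1P [->].
Qed.

(* A witness for a nonempty intersection: used to show that a defined
   variable which is live afterwards activates the conditional part of Ref. *)
Lemma meet_witness (D Lo : {set V}) (x : V) :
  x \in D -> x \in Lo -> D :&: Lo != set0.
Proof. by move=> xD xLo; apply/set0Pn; exists x; rewrite inE xD. Qed.

Lemma transfer_keep (s : stmt V) (A : {set V * V}) (x v : V) :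
  (x, v) \in A -> x \notin Kill P undef s A -> (x, v) \in transfer s A.
Proof. by move=> xvA xK; rewrite !inE /= xvA (negbTE xK). Qed.

Lemma transfer_gen (s : stmt V) (A : {set V * V}) (x v : V) :
  x \in Def P s A -> v \in Pointee s A -> (x, v) \in transfer s A.
Proof. by move=> xD vPt; rewrite !inE /= xD vPt orbT. Qed.

Lemma exec_sound (s : stmt V) (A : {set V * V}) (Lo : {set V}) (sg sg' : V -> V) :
  agrees A ((Lo :\: Kill P undef s A) :|: Ref P s A Lo) sg ->
  exec P undef s sg = Some sg' ->
  agrees (transfer s A) Lo sg'.
Proof.
move=> ag; have ref y : y \in Ref P s A Lo -> sg y != undef -> (y, sg y) \in A.
  by move=> yR; apply: ag; rewrite inE yR orbT.
have keep x : x \in Lo -> x \notin Kill P undef s A -> sg x != undef ->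
    (x, sg x) \in transfer s A.
  by move=> xLo xK xd; apply: transfer_keep => //; apply: ag; rewrite // !inE xK xLo.
move: ref keep {ag}; rewrite /agrees.
case: s => [u | y a | y w | y w | y w |] /= ref keep.
- by case=> <- x xLo; apply: (keep x xLo); rewrite inE.
- case=> <- x xLo; case: (eqVneq x y) => [-> _ | nxy].
    by rewrite upd_same; apply: transfer_gen; rewrite inE.
  by rewrite upd_other //; apply: (keep x xLo); rewrite inE.
- case=> <- x; case: (eqVneq x y) => [-> | nxy] xLo.
    rewrite upd_same => wd; apply: transfer_gen; first by rewrite inE.
    by rewrite /= mem_img1; apply: ref wd; rewrite (meet_witness (x := y)) ?inE ?eqxx.
  by rewrite upd_other //; apply: (keep x xLo); rewrite inE.
- case: eqP => // /eqP wd [<-] x.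
  case: (eqVneq x y) => [-> | nxy] xLo; last first.
    by rewrite upd_other //; apply: (keep x xLo); rewrite inE.
  rewrite upd_same; case: ifP => [wP vd | _]; last by rewrite eqxx.
  rewrite (meet_witness (x := y)) ?inE ?eqxx // in ref.
  have wA : (w, sg w) \in A by apply: ref wd; rewrite !inE eqxx.
  have swA : (sg w, sg (sg w)) \in A.
    by apply: ref vd; rewrite in_setU in_setI mem_img1 wA wP orbT.
  apply: transfer_gen; first by rewrite inE.
  by rewrite /= inE; apply/existsP; exists (sg w); rewrite mem_img1 wA swA.
- case: eqP => // /eqP yd.
  have yA : (y, sg y) \in A by apply: ref yd; case: ifP; rewrite !inE eqxx.
  have notK x : x != sg y -> x \notin Kill P undef (SStore y w) A.
    by apply: contra => /setIP [/(Must_pointee yA yd) ->].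
  case: ifP => [yP | yP] [<-] x xLo; last first.
    apply: (keep x xLo); apply/negP => /setIP [/(Must_pointee yA yd) -> sgyP].
    by rewrite sgyP in yP.
  case: (eqVneq x (sg y)) xLo => [-> | nxy] xLo; last first.
    by rewrite upd_other //; apply: (keep x xLo); apply: notK.
  rewrite upd_same => wd.
  have yD : sg y \in img A [set y] :&: P by rewrite in_setI mem_img1 yA yP.
  rewrite (meet_witness yD xLo) in ref.
  apply: transfer_gen => //=; rewrite mem_img1; apply: ref wd.
  by rewrite !inE eqxx orbT.
- by case=> <- x xLo; apply: (keep x xLo); rewrite inE.
Qed.

End Transfer.

Section FixedPoint.
Variables (V : finType) (P : {set V}) (undef : V).
Variables (N : finType) (start endn : N) (succ : N -> {set N}) (lab : N -> stmt V).
Variable S : sol V N.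
Hypothesis start_no_pred : forall m, start \notin succ m.
Hypothesis end_no_succ : succ endn = set0.
Hypothesis S_fixed : step P undef start endn succ lab S = S.

Lemma LinE (n : N) : Lin S n =
  (Lout S n :\: Kill P undef (lab n) (Ain S n)) :|: Ref P (lab n) (Ain S n) (Lout S n).
Proof. by rewrite -{1}S_fixed /= ffunE. Qed.

Lemma LoutE (n : N) :
  Lout S n = if n == endn then set0 else \bigcup_(s in succ n) Lin S s.
Proof. by rewrite -{1}S_fixed /= ffunE. Qed.

Lemma AinE (n : N) : Ain S n =
  if n == start then setX (Lin S n) [set undef]
  else restr (\bigcup_(m in Defs.predn succ n) Aout S m) (Lin S n).
Proof. by rewrite -{1}S_fixed /= ffunE. Qed.

Lemma AoutE (n : N) : Aout S n = restr (transfer P undef (lab n) (Ain S n)) (Lout S n).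
Proof. by rewrite -{1}S_fixed /= ffunE. Qed.

Lemma Lout_succ (m n : N) (x : V) : n \in succ m -> x \in Lin S n -> x \in Lout S m.
Proof.
move=> mn xL; have mE : m != endn by apply: contraTneq mn => ->; rewrite end_no_succ inE.
by rewrite LoutE (negbTE mE); apply/bigcupP; exists n.
Qed.

Lemma reaches_agrees (n : N) (sg : V -> V) :
  reaches P undef start succ lab n sg -> agrees undef (Ain S n) (Lin S n) sg.
Proof.
elim=> [| m {}n sg0 sg1 _ IH mn run] x xL xd; first by rewrite eqxx in xd.
have nS : n != start by apply: contraNneq (start_no_pred m) => <-.
have xA : (x, sg1 x) \in transfer P undef (lab m) (Ain S m).
  by apply: (exec_sound _ run) (Lout_succ mn xL) xd; rewrite -LinE; exact: IH.
rewrite AinE (negbTE nS) inE /= xL andbT; apply/bigcupP; exists m; first by rewrite inE.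
by rewrite AoutE inE xA (Lout_succ mn xL).
Qed.

End FixedPoint.

(* Step 3: referenced variables are live on entry, so Step 2 applies.  The
   theorem holds at every fixed point, in particular at the iterate [S]. *)
Theorem theorem3 (V : finType) (P : {set V}) (undef : V)
    (N : finType) (start endn : N) (succ : N -> {set N}) (lab : N -> stmt V)
    (S : sol V N) (k : nat) :
  wf_proc P undef start endn succ lab ->
  S = iter k (step P undef start endn succ lab) (sol0 V N) ->
  step P undef start endn succ lab S = S ->
  forall (n : N) (x z : V) (sg : V -> V),
    x \in P -> z != undef ->
    reaches P undef start succ lab n sg ->
    sg x = z ->
    x \in Ref P (lab n) (Ain S n) (Lout S n) ->
    (x, z) \in Ain S n.
Proof.
move=> [_ [start_no_pred end_no_succ _ _ _]] _ S_fixed n x z sg _ zd run xz xR; subst z.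
have xL : x \in Lin S n by rewrite (LinE S_fixed) inE xR orbT.
exact: (reaches_agrees start_no_pred end_no_succ S_fixed run xL zd).
Qed.
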